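(* Let $a,b\in GF(q)\setminus\{0\}$ and let $\mu\in GF(q)$ satisfy $\mu^2=\frac ba\neq1$. Let $\mathcal B^1_{(s,c)}\in\tau(a,b)$ and let $P$ be the point of $\mathcal B_a\cap\mathcal B^1_{(s,c)}$. Then the unique point of $\mathcal B_b\cap\mathcal B^1_{(s,c)}$ is either $\mu P$ or $-\mu P$.
   Context: Let $p$ be an odd prime, $m\ge1$, and $q=p^m$. $GF(q^2)$ denotes the quadratic extension of $GF(q)$, and for $z\in GF(q^2)$ we write $\bar z:=z^{q}$. The Miquelian Möbius plane $\mathbb M(q)$ has point set $GF(q^2)\cup\{\infty\}$ and circles of two types: for $s\in GF(q^2)$ and $c\in GF(q)\setminus\{0\}$, the circle of the first type $\mathcal B^1_{(s,c)}=\{z\in GF(q^2):(z-s)(\bar z-\bar s)=c\}$; for $s\in GF(q^2)\setminus\{0\}$ and $c\in GF(q)$, the circle of the second type $\mathcal B^2_{(s,c)}=\{z\in GF(q^2):\bar s z+s\bar z=c\}\cup\{\infty\}$. Two circles are called tangential if they have exactly one point in common. For $a\in GF(q)\setminus\{0\}$ put $\mathcal B_a:=\mathcal B^1_{(0,a)}$, and for $a,b\in GF(q)\setminus\{0\}$ let $\tau(a,b)$ be the set of circles tangential to both $\mathcal B_a$ and $\mathcal B_b$. *)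

From HB Require Import structures.
From mathcomp Require Import all_boot all_order all_algebra all_field.
Set Implicit Arguments. Unset Strict Implicit. Unset Printing Implicit Defensive.
Import GRing.Theory.
Local Open Scope ring_scope.

(* L plays the role of GF(q^2); q is passed explicitly.
   Points of the Miquelian Moebius plane M(q): option L, with None = infinity. *)

Definition conjq (L : finFieldType) (q : nat) (z : L) : L := z ^+ q.

Definition GFq (L : finFieldType) (q : nat) : {set L} :=
  [set x : L | x ^+ q == x].

Definition circle1 (L : finFieldType) (q : nat) (s c : L) : {set option L} :=
  [set x : option L | if x is Some z
                      then (z - s) * (conjq q z - conjq q s) == c
                      else false].

Definition circle2 (L : finFieldType) (q : nat) (s c : L) : {set option L} :=
  [set x : option L | if x is Some z
                      then conjq q s * z + s * conjq q z == c
                      else true].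

Definition circles (L : finFieldType) (q : nat) : {set {set option L}} :=
  [set C : {set option L} |
     [exists s : L, exists c : L,
        ((c \in @GFq L q) && (c != 0) && (C == @circle1 L q s c))
     || ((s != 0) && (c \in @GFq L q) && (C == @circle2 L q s c))]].

Definition tangential (L : finFieldType) (C D : {set option L}) : bool :=
  #|C :&: D| == 1%N.

Definition Bcirc (L : finFieldType) (q : nat) (a : L) : {set option L} :=
  circle1 q 0 a.

Definition tau (L : finFieldType) (q : nat) (a b : L) : {set {set option L}} :=
  [set C in @circles L q | tangential C (Bcirc q a) && tangential C (Bcirc q b)].

(* The reflection z |-> s zbar / sbar in the line through 0 and s fixes both
   B_a and B^1_(s,c), so it fixes their unique common point P.  That gives
   P sbar = s Pbar, hence P^2 sbar = s P Pbar = a s; likewise Q^2 sbar = b s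
   for the common point Q with B_b, so (Q/P)^2 = b/a = mu^2.  When s = 0 the
   circles are concentric and touching both B_a and B_b would force a = c = b. *)
From HB Require Import structures.
From mathcomp Require Import all_boot all_order all_algebra all_field.
From mathcomp Require Import ring.
Set Implicit Arguments.
Import GRing.Theory.
Local Open Scope ring_scope.

Lemma tangential_circle1 {L : finFieldType} {q : nat} {C : {set option L}}
    {s c : L} :
  tangential (circle1 q s c) C -> exists z, C :&: circle1 q s c = [set Some z].
Proof.
rewrite /tangential setIC => /cards1P[[z|] Cz]; first by exists z.
by have := set11 (@None L); rewrite -Cz !inE andbF.
Qed.

Section MoebiusPlane.
Context {L : finFieldType} {q : nat}.
Hypothesis hL : #|L| = (q ^ 2)%N.

Lemma conjqM (x y : L) : conjq q (x * y) = conjq q x * conjq q y.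
Proof. exact: exprMn. Qed.

Lemma conjqV (x : L) : conjq q x^-1 = (conjq q x)^-1.
Proof. exact: exprVn. Qed.

Lemma conjqK : involutive (@conjq L q).
Proof. by move=> x; rewrite /conjq -exprM mulnn -hL expf_card. Qed.

Lemma conjq_eq0 (x : L) : (conjq q x == 0) = (x == 0).
Proof.
have q_gt0 : (0 < q)%N.
  have : (0 < #|L|)%N by apply/card_gt0P; exists 0.
  by rewrite hL; case: (q).
by rewrite /conjq expf_eq0 q_gt0.
Qed.

Lemma conjq0 : conjq q (0 : L) = 0.
Proof. by apply/eqP; rewrite conjq_eq0. Qed.

Lemma mem_Bcirc (a z : L) : (Some z \in Bcirc q a) = (z * conjq q z == a).
Proof. by rewrite inE conjq0 !subr0. Qed.

Lemma concentric_meet (a c z : L) :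
  Some z \in Bcirc q a :&: circle1 q 0 c -> a = c.
Proof. by rewrite inE mem_Bcirc inE conjq0 !subr0 => /andP[/eqP <- /eqP]. Qed.

Definition axial_reflection (s z : L) : L := s * conjq q z / conjq q s.

Section Reflection.
Variable s : L.
Hypothesis s0 : s != 0.

Let cs0 : conjq q s != 0. Proof. by rewrite conjq_eq0. Qed.

Lemma conjq_axial_reflection (z : L) :
  conjq q (axial_reflection s z) = conjq q s * z / s.
Proof. by rewrite /axial_reflection !conjqM conjqV !conjqK. Qed.

Lemma axial_reflection_Bcirc (a z : L) :
  Some z \in Bcirc q a -> Some (axial_reflection s z) \in Bcirc q a.
Proof.
rewrite !mem_Bcirc conjq_axial_reflection => /eqP <-.
by apply/eqP; rewrite /axial_reflection; field; rewrite s0 cs0.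
Qed.

Lemma axial_reflection_circle1 (c z : L) :
  Some z \in circle1 q s c -> Some (axial_reflection s z) \in circle1 q s c.
Proof.
rewrite !inE conjq_axial_reflection => /eqP <-.
by apply/eqP; rewrite /axial_reflection; field; rewrite s0 cs0.
Qed.

Lemma tangent_point_fixed (a c z : L) :
  tangential (circle1 q s c) (Bcirc q a) ->
  Some z \in Bcirc q a :&: circle1 q s c -> axial_reflection s z = z.
Proof.
move=> /tangential_circle1[w BC]; rewrite BC inE => /eqP[->].
have : Some w \in Bcirc q a :&: circle1 q s c by rewrite BC set11.
rewrite inE => /andP[/axial_reflection_Bcirc wB /axial_reflection_circle1 wC].
have : Some (axial_reflection s w) \in Bcirc q a :&: circle1 q s c.
  by rewrite inE wB wC.
by rewrite BC inE => /eqP[].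
Qed.

Lemma tangent_point_sqr (a c z : L) :
  tangential (circle1 q s c) (Bcirc q a) ->
  Some z \in Bcirc q a :&: circle1 q s c -> z ^+ 2 * conjq q s = a * s.
Proof.
move=> tan zBC; have zfix := tangent_point_fixed tan zBC.
have on_axis : z * conjq q s = s * conjq q z.
  by rewrite -{1}zfix /axial_reflection divfK.
move: zBC; rewrite inE mem_Bcirc => /andP[/eqP <- _].
by rewrite expr2 -mulrA on_axis; ring.
Qed.

End Reflection.
End MoebiusPlane.

Theorem mainTheorem4 (L : finFieldType) (p m q : nat)
  (hp : prime p) (hodd : odd p) (hm : (0 < m)%N) (hq : q = (p ^ m)%N)
  (hL : #|L| = (q ^ 2)%N)
  (a b mu s c P : L)
  (ha : a \in @GFq L q) (ha0 : a != 0)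
  (hb : b \in @GFq L q) (hb0 : b != 0)
  (hmu : mu \in @GFq L q)
  (hmu2 : mu ^+ 2 = b / a) (hba : b / a != 1)
  (hc : c \in @GFq L q) (hc0 : c != 0)
  (htau : @circle1 L q s c \in @tau L q a b)
  (hP : Some P \in @Bcirc L q a :&: @circle1 L q s c) :
  @Bcirc L q b :&: @circle1 L q s c = [set Some (mu * P)]
  \/ @Bcirc L q b :&: @circle1 L q s c = [set Some (- (mu * P))].
Proof.
move: htau; rewrite inE => /andP[_ /andP[tanA tanB]].
have [Q BCQ] := tangential_circle1 tanB.
have hQ : Some Q \in Bcirc q b :&: circle1 q s c by rewrite BCQ set11.
have [s0 | s0] := eqVneq s 0.
  move: hP hQ; rewrite s0 => /(concentric_meet hL) <- /(concentric_meet hL) ab.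
  by rewrite ab divff ?eqxx in hba.
have cs0 : conjq q s != 0 by rewrite (conjq_eq0 hL).
have PQ : Q ^+ 2 = (mu * P) ^+ 2.
  apply: (mulIf cs0); rewrite (tangent_point_sqr hL s0 tanB hQ).
  by rewrite exprMn hmu2 -mulrA (tangent_point_sqr hL s0 tanA hP) mulrA divfK.
rewrite BCQ; move/eqP: PQ; rewrite eqf_sqr => /orP[] /eqP ->; by [left | right].
Qed.
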